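(* Let $E$ be a (real, Hausdorff) locally convex space and let $B\subseteq E$ be a bounded subset. Then $B$ is tame in $E$ if and only if $B$ contains no bounded $l^1$-sequence. Consequently, a locally convex space $E$ is tame if and only if $E$ contains no bounded $l^1$-sequence.
   Context: For a locally convex space $E$, $E^*$ denotes its topological dual and ${\rm eqc}(E^* )$ the family of all equicontinuous, weak-star compact subsets of $E^*$. A sequence of real functions $(f_n)_{n\in\mathbb N}$ on a set $X$ is independent if there are reals $a<b$ such that $\bigcap_{n\in P} f_n^{-1}(-\infty,a)\cap\bigcap_{n\in M} f_n^{-1}(b,\infty)\neq\emptyset$ for all finite disjoint $P,M\subseteq\mathbb N$. A bounded family of real functions on $X$ is tame if it contains no independent sequence. A bounded subset $B\subseteq E$ is tame (in $E$) if for every $K\in{\rm eqc}(E^* )$ the family of functions $\{K\to\mathbb R,\ \varphi\mapsto\varphi(b)\}_{b\in B}$ is a tame family on $K$. $E$ is tame if every bounded subset of $E$ is tame. A bounded sequence $(x_n)$ in $E$ is an $l^1$-sequence (equivalent to the $l^1$-basis) if there exist a continuous seminorm $\rho$ on $E$ and $\delta>0$ such that $\delta\sum_{i=1}^n|c_i|\le\rho(\sum_{i=1}^n c_ix_i)$ for all $n$ and all reals $c_1,\dots,c_n$. *)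

From HB Require Import structures.
From mathcomp Require Import all_boot all_order all_algebra.
From mathcomp Require Import all_classical all_reals all_analysis.
Set Implicit Arguments. Unset Strict Implicit. Unset Printing Implicit Defensive.
Import Order.TTheory GRing.Theory Num.Theory.
Import numFieldNormedType.Exports.
Local Open Scope classical_set_scope.
Local Open Scope ring_scope.

Section Tame.
Context {R : realType} {E : tvsType R}.

Definition tvs_bounded (B : set E) : Prop :=
  forall U : set E, nbhs (0 : E) U ->
    exists2 s : R, 0 < s & forall t : R, s < t -> B `<=` [set t *: u | u in U].

Definition dual_space : set (E -> R) :=
  [set phi | (forall (a : R) (x y : E), phi (a *: x + y) = a * phi x + phi y)
             /\ continuous phi].

(** The weak-star topology on E^star is the topology of pointwise convergence,
    i.e. the subspace topology of the product topology {ptws E -> R}. *)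
Definition eqc (K : set (E -> R)) : Prop :=
  K `<=` dual_space /\
  equicontinuous K (fun phi : E -> R => phi) /\
  compact (K : set {ptws E -> R}).

Definition independent_seq {T : Type} (X : set T) (f : nat -> T -> R) : Prop :=
  exists a b : R, a < b /\
    forall P M : seq nat, (forall n, n \in P -> n \notin M) ->
      exists2 x, X x &
        (forall n, n \in P -> f n x < a) /\ (forall n, n \in M -> b < f n x).

Definition tame_family {T : Type} (X : set T) (F : set (T -> R)) : Prop :=
  (exists M : R, forall f, F f -> forall x, X x -> `|f x| <= M) /\
  ~ (exists f : nat -> T -> R, (forall n, F (f n)) /\ independent_seq X f).

Definition tame_set (B : set E) : Prop :=
  tvs_bounded B /\
  forall K : set (E -> R), eqc K ->
    tame_family K [set (fun phi : E -> R => phi b) | b in B].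

Definition tame_space : Prop := forall B : set E, tvs_bounded B -> tame_set B.

Definition continuous_seminorm (rho : E -> R) : Prop :=
  (forall x y : E, rho (x + y) <= rho x + rho y) /\
  (forall (t : R) (x : E), rho (t *: x) = `|t| * rho x) /\
  continuous rho.

(** Bounded l^1-sequence (equivalent to the l^1-basis). *)
Definition l1_sequence (x : nat -> E) : Prop :=
  tvs_bounded (range x) /\
  exists rho : E -> R, continuous_seminorm rho /\
    exists2 delta : R, 0 < delta &
      forall (n : nat) (c : nat -> R),
        delta * (\sum_(i < n) `|c i|) <= rho (\sum_(i < n) c i *: x i).

End Tame.

From HB Require Import structures.
From mathcomp Require Import all_boot all_order all_algebra.
From mathcomp Require Import all_classical all_reals all_analysis.
From mathcomp Require Import ring lra.
Set Implicit Arguments. Unset Strict Implicit. Unset Printing Implicit Defensive.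
Import Order.TTheory GRing.Theory Num.Theory.
Import numFieldNormedType.Exports.
Local Open Scope classical_set_scope.
Local Open Scope ring_scope.

(* If x is an l^1-sequence for a continuous seminorm rho with constant delta,
   then by Hahn-Banach every sign pattern on the x n is realised by a functional
   in the polar of rho / delta, an equicontinuous weak-star compact set, so the
   evaluations at the x n form an independent sequence on it.  Conversely, if the
   evaluations at the x n are independent on some K in eqc(E^star) with gap (a, b),
   then for any coefficients c two functionals of K realising the sign pattern of
   c and its opposite differ by at least (b - a) * sum |c_i| on sum c_i x_i, so
   x is an l^1-sequence for the seminorm v |-> sup_(phi in K) |phi v|. *)

Section LinearFunctional.
Context {R : realType} {E : lmodType R}.

Definition linear_functional (phi : E -> R) : Prop :=
  forall (a : R) (x y : E), phi (a *: x + y) = a * phi x + phi y.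

Variable phi : E -> R.
Hypothesis phi_lin : linear_functional phi.

Lemma linear_functional0 : phi 0 = 0.
Proof. by have := phi_lin 1 0 0; rewrite scale1r addr0 mul1r => h; lra. Qed.

Lemma linear_functionalD x y : phi (x + y) = phi x + phi y.
Proof. by rewrite -[x]scale1r phi_lin scale1r mul1r. Qed.

Lemma linear_functionalZ a x : phi (a *: x) = a * phi x.
Proof. by rewrite -[a *: x]addr0 phi_lin linear_functional0 addr0. Qed.

Lemma linear_functionalB x y : phi (x - y) = phi x - phi y.
Proof. by rewrite -scaleN1r addrC phi_lin; ring. Qed.

Lemma linear_functional_sum n (c : nat -> R) (x : nat -> E) :
  phi (\sum_(i < n) c i *: x i) = \sum_(i < n) c i * phi (x i).
Proof.
elim: n => [|n IHn]; first by rewrite !big_ord0 linear_functional0.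
by rewrite !big_ord_recr /= addrC phi_lin IHn addrC.
Qed.

End LinearFunctional.

Lemma closure_preimage_closed (T U : topologicalType) (A : set T) (f : T -> U)
    (C : set U) :
  continuous f -> closed C -> A `<=` f @^-1` C -> closure A `<=` f @^-1` C.
Proof.
move=> f_cont C_closed AC.
rewrite [X in _ `<=` X](closure_id _).1; first exact: closureS.
exact: preimage_closed.
Qed.

Section Seminorm.
Context {R : realType} {E : tvsType R}.
Variable rho : E -> R.
Hypothesis rho_sn : continuous_seminorm rho.

Lemma seminorm0 : rho 0 = 0.
Proof. by case: rho_sn => _ [rhoZ _]; rewrite -(scale0r 0) rhoZ normr0 mul0r. Qed.

Lemma seminormN x : rho (- x) = rho x.
Proof. by case: rho_sn => _ [rhoZ _]; rewrite -scaleN1r rhoZ normrN normr1 mul1r. Qed.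

Lemma continuous_seminormZl (k : R) :
  0 <= k -> continuous_seminorm (fun x => k * rho x).
Proof.
case: rho_sn => rhoD [rhoZ rho_cont] k_ge0; split; [|split].
- by move=> x y; rewrite -mulrDr ler_wpM2l.
- by move=> t x; rewrite rhoZ mulrCA.
- by move=> x; apply: cvgM; [exact: cvg_cst | exact: rho_cont].
Qed.

Lemma seminorm_near x e : 0 < e -> \forall y \near x, rho (x - y) < e.
Proof.
case: rho_sn => _ [_ rho_cont] e_gt0.
have : rho (x - y) @[y --> x] --> rho (x - x).
  apply: (@continuous_comp _ _ _ (fun y => x - y) rho) (rho_cont _).
  apply: (@continuous_comp _ _ _ (fun y : E => (x, y)) (fun z : E * E => z.1 - z.2)).
    by apply: cvg_pair; [exact: cvg_cst | exact: cvg_id].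
  exact: sub_continuous.
rewrite subrr seminorm0 => /cvgrPdist_lt /(_ e e_gt0).
by apply: filterS => y; rewrite sub0r normrN; apply: le_lt_trans; exact: ler_norm.
Qed.

End Seminorm.

Section Polar.
Context {R : realType} {E : tvsType R}.
Variable rho : E -> R.

Definition polar : set (E -> R) :=
  [set phi | linear_functional phi /\ forall x, `|phi x| <= rho x].

Lemma polar_closed : closed (polar : set {ptws E -> R}).
Proof.
have eval_cont x : continuous (fun g : {ptws E -> R} => g x).
  exact: (@proj_continuous E (fun _ => R) x).
move=> f f_cl; split => [a x y | x].
- pose defect (g : {ptws E -> R}) := g (a *: x + y) - a * g x - g y.
  have : closure (polar : set {ptws E -> R}) `<=` defect @^-1` [set r | r = 0].
    apply: closure_preimage_closed => [g||g [g_lin _]].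
    + have eval_ax := cvgMl_tmp (FF := nbhs_filter g) (a := a) (eval_cont x g).
      exact: (cvgB (FF := nbhs_filter g)
        (cvgB (FF := nbhs_filter g) (eval_cont _ g) eval_ax) (eval_cont y g)).
    + exact: closed_eq.
    + by rewrite /defect /= g_lin; ring.
  by move=> /(_ f f_cl) /eqP; rewrite /defect -addrA -opprD subr_eq0 => /eqP.
- have : closure (polar : set {ptws E -> R}) `<=`
      (fun g : {ptws E -> R} => `|g x|) @^-1` [set r | r <= rho x].
    apply: closure_preimage_closed => [g||g [_ g_le]].
    + by apply: continuous_comp; [exact: eval_cont | exact: norm_continuous].
    + exact: closed_le.
    + exact: g_le.
  by move=> /(_ f f_cl).
Qed.

Hypothesis rho_sn : continuous_seminorm rho.

Lemma polar_near x e : 0 < e ->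
  \forall y \near x, forall phi, polar phi -> `|phi x - phi y| < e.
Proof.
move=> e_gt0; apply: filterS (seminorm_near rho_sn x e_gt0).
move=> y rho_lt phi [phi_lin phi_le].
by rewrite -linear_functionalB //; exact: le_lt_trans (phi_le _) rho_lt.
Qed.

Lemma eqc_polar : eqc polar.
Proof.
split; [|split].
- move=> phi phi_polar; split; first exact: phi_polar.1.
  move=> x; apply/cvgrPdist_lt => e e_gt0.
  by apply: filterS (polar_near x e_gt0) => y /(_ phi phi_polar).
- move=> x A; rewrite -entourage_from_ballE => -[e /= e_gt0 eA].
  apply: filterS (polar_near x e_gt0) => y near_y phi phi_polar.
  by apply: eA; rewrite /= -ball_normE; exact: near_y.
- have box_compact : compact
      [set f : {ptws E -> R} | forall x, `[- rho x, rho x]%classic (f x)].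
    exact: (@tychonoff E (fun _ => R) (fun x => `[- rho x, rho x]%classic)
      (fun x => @segment_compact R _ _)).
  apply: (subclosed_compact polar_closed box_compact).
  by move=> g [_ g_le] x /=; rewrite in_itv /= -ler_norml.
Qed.

End Polar.

Section HahnBanach.
Context {R : realType} {E : lmodType R}.

Definition linear_relation (G : set (E * R)) : Prop :=
  G (0, 0) /\
  forall a x r y s, G (x, r) -> G (y, s) -> G (a *: x + y, a * r + s).

Variable p : E -> R.
Hypothesis pD : forall x y, p (x + y) <= p x + p y.
Hypothesis pZ : forall (t : R) x, p (t *: x) = `|t| * p x.

Definition dominated_relation (G : set (E * R)) : Prop :=
  linear_relation G /\ forall x r, G (x, r) -> r <= p x.

Definition adjoin_relation (G : set (E * R)) (z : E) (c : R) : set (E * R) :=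
  [set w | exists x r t, G (x, r) /\ w = (x + t *: z, r + t * c)].

Lemma sublinear0 : p 0 = 0.
Proof. by rewrite -(scale0r 0) pZ normr0 mul0r. Qed.

Lemma dominated_relation_functional G x r s :
  dominated_relation G -> G (x, r) -> G (x, s) -> r = s.
Proof.
move=> [[_ G_lin] G_le] Gr Gs.
have := G_le _ _ (G_lin (-1) _ _ _ _ Gr Gs).
have := G_le _ _ (G_lin (-1) _ _ _ _ Gs Gr).
by rewrite scaleN1r addNr sublinear0; lra.
Qed.

Lemma dominated_relation_gap G z : dominated_relation G ->
  exists c, forall x r, G (x, r) -> r - p (x - z) <= c /\ c <= p (x + z) - r.
Proof.
move=> [[G0 G_lin] G_le].
pose S := [set u | exists x r, G (x, r) /\ u = r - p (x - z)].
have S_le x r : G (x, r) -> ubound S (p (x + z) - r).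
  move=> Gxr _ [y [s [Gys ->]]].
  have := G_le _ _ (G_lin 1 _ _ _ _ Gxr Gys); rewrite scale1r mul1r => le_sum.
  have := pD (x + z) (y - z); rewrite addrACA subrr addr0; lra.
have S_sup : has_sup S.
  by split; [exists (0 - p (0 - z)), 0, 0 | exists (p (0 + z) - 0); exact: S_le].
exists (sup S) => x r Gxr; split; last exact: ge_sup S_sup.1 (S_le _ _ Gxr).
by apply: (ub_le_sup S_sup.2); exists x, r.
Qed.

Lemma dominated_relation_adjoin G z c : dominated_relation G ->
    (forall x r, G (x, r) -> r - p (x - z) <= c /\ c <= p (x + z) - r) ->
  dominated_relation (adjoin_relation G z c).
Proof.
move=> [[G0 G_lin] G_le] c_gap; split; [split|].
- by exists 0, 0, 0; rewrite scale0r addr0 mul0r addr0.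
- move=> a _ _ _ _ [x1 [r1 [t1 [G1 [-> ->]]]]] [x2 [r2 [t2 [G2 [-> ->]]]]].
  exists (a *: x1 + x2), (a * r1 + r2), (a * t1 + t2); split; first exact: G_lin.
  by congr (_, _); [rewrite scalerDr scalerA scalerDl addrACA | ring].
move=> _ _ [x [r [t [Gxr [-> ->]]]]].
have G_scaled u : G (u *: x, u * r).
  by rewrite -[u *: x]addr0 -[u * r]addr0; exact: G_lin.
have pZV u y : 0 < u -> u * p (u^-1 *: y) = p y.
  move=> u_gt0; rewrite pZ ger0_norm ?invr_ge0 ?ltW // mulrA.
  by rewrite mulfV ?gt_eqF // mul1r.
have [t_lt0|t_gt0|->] := ltgtP t 0; last first.
- by rewrite scale0r addr0 mul0r addr0; exact: G_le.
- have := (c_gap _ _ (G_scaled t^-1)).2.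
  have -> : t^-1 *: x + z = t^-1 *: (x + t *: z).
    by rewrite scalerDr scalerA mulVf ?gt_eqF // scale1r.
  move=> /(ler_wpM2l (ltW t_gt0)); rewrite mulrBr pZV // mulrA mulfV ?gt_eqF //.
  by rewrite mul1r; lra.
- have u_gt0 : 0 < - t by rewrite oppr_gt0.
  have := (c_gap _ _ (G_scaled (- t)^-1)).1.
  have -> : (- t)^-1 *: x - z = (- t)^-1 *: (x + t *: z).
    by rewrite scalerDr scalerA invrN mulNr mulVf ?lt_eqF // scaleN1r.
  move=> /(ler_wpM2l (ltW u_gt0)); rewrite mulrBr pZV // mulrA mulfV ?gt_eqF //.
  by rewrite mul1r; lra.
Qed.

Lemma dominated_relation_extend G z : dominated_relation G ->
  exists G', [/\ dominated_relation G', G `<=` G' & exists r, G' (z, r)].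
Proof.
move=> G_dom; have [c c_gap] := dominated_relation_gap z G_dom.
exists (adjoin_relation G z c); split.
- exact: dominated_relation_adjoin.
- by move=> [x r] Gxr; exists x, r, 0; rewrite scale0r addr0 mul0r addr0.
- by exists c, 0, 0, 1; rewrite add0r scale1r mul1r add0r; split; case: G_dom => [[]].
Qed.

Lemma dominated_relation_chain_union G0 (F : set (set (E * R))) :
    dominated_relation G0 -> total_on F subset ->
    (forall G, F G -> dominated_relation (G0 `|` G)) ->
  dominated_relation (G0 `|` \bigcup_(G in F) G).
Proof.
move=> G0_dom F_chain F_dom.
set U := \bigcup_(G in F) G.
have common w1 w2 : (G0 `|` U) w1 -> (G0 `|` U) w2 ->
    exists2 H, dominated_relation (G0 `|` H) &
      [/\ H `<=` U, (G0 `|` H) w1 & (G0 `|` H) w2].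
  move=> [G0w1|[G1 FG1 G1w1]] [G0w2|[G2 FG2 G2w2]].
  - by exists set0; [rewrite setU0 | split; by [|left]].
  - by exists G2; [exact: F_dom | split; [exact: bigcup_sup | left | right]].
  - by exists G1; [exact: F_dom | split; [exact: bigcup_sup | right | left]].
  - have [G12|G21] := F_chain _ _ FG1 FG2.
      exists G2; first exact: F_dom.
      by split; [exact: bigcup_sup | right; exact: G12 | right].
    exists G1; first exact: F_dom.
    by split; [exact: bigcup_sup | right | right; exact: G21].
split; [split|].
- by left; case: G0_dom => [[]].
- move=> a x r y s w1 w2.
  have [H [[_ H_lin] _] [H_sub Hw1 Hw2]] := common _ _ w1 w2.
  by case: (H_lin a x r y s Hw1 Hw2) => [|/H_sub]; [left | right].
- move=> x r w; have [H [_ H_le] [_ Hw _]] := common _ _ w w; exact: H_le.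
Qed.

Theorem hahn_banach G0 : dominated_relation G0 ->
  exists phi : E -> R, [/\ linear_functional phi, forall x, phi x <= p x &
    forall x r, G0 (x, r) -> phi x = r].
Proof.
move=> G0_dom.
(* Maximising over [M] with [G0 `|` M] dominated, rather than over dominated
   supersets of [G0], makes the union of the empty chain admissible. *)
have [M [M_dom M_max]] : exists M, dominated_relation (G0 `|` M) /\
    forall G, M `<` G -> ~ dominated_relation (G0 `|` G).
  apply: Zorn_bigcup => F F_dom F_chain.
  exact: dominated_relation_chain_union.
have M_total z : exists r, (G0 `|` M) (z, r).
  have [G [G_dom G0MG [r Gzr]]] := dominated_relation_extend z M_dom.
  have G0G : G0 `|` G = G by apply/setUidPr => w G0w; apply: G0MG; left.
  exists r; right; apply: contrapT => Mzr.
  apply: (M_max G); last by rewrite G0G.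
  by split=> [w Mw|/(_ _ Gzr)//]; apply: G0MG; right.
have [phi phi_M] := choice M_total.
have [[_ M_lin] M_le] := M_dom.
exists phi; split.
- move=> a x y; apply: (dominated_relation_functional M_dom (phi_M _)).
  exact: M_lin.
- by move=> x; exact: M_le.
- move=> x r G0xr; apply: (dominated_relation_functional M_dom (phi_M _)).
  by left.
Qed.

End HahnBanach.

Lemma sum_ord_widen (V : zmodType) n N (F : nat -> V) : (n <= N)%N ->
  \sum_(i < n) F i = \sum_(i < N) (if (i < n)%N then F i else 0).
Proof. by move=> le_nN; rewrite (big_ord_widen N F le_nN) big_mkcond. Qed.

Section SpanRelation.
Context {R : realType} {E : lmodType R}.
Variables (x : nat -> E) (e : nat -> R).

Definition span_relation : set (E * R) :=
  [set w | exists n (c : nat -> R),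
    w = (\sum_(i < n) c i *: x i, \sum_(i < n) c i * e i)].

Lemma span_relation_linear : linear_relation span_relation.
Proof.
split; first by exists 0%N, (fun=> 0); rewrite !big_ord0.
move=> a _ _ _ _ [n1 [c1 [-> ->]]] [n2 [c2 [-> ->]]].
pose N := maxn n1 n2; pose pad n (c : nat -> R) i := if (i < n)%N then c i else 0.
exists N, (fun i => a * pad n1 c1 i + pad n2 c2 i).
have [le1 le2] : (n1 <= N)%N /\ (n2 <= N)%N by rewrite leq_maxl leq_maxr.
rewrite (sum_ord_widen (fun i => c1 i *: x i) le1).
rewrite (sum_ord_widen (fun i => c2 i *: x i) le2).
rewrite (sum_ord_widen (fun i => c1 i * e i) le1).
rewrite (sum_ord_widen (fun i => c2 i * e i) le2).
rewrite scaler_sumr mulr_sumr -!big_split /=; congr (_, _); apply: eq_bigr => i _;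
  rewrite /pad; case: ifP => _; case: ifP => _;
  by rewrite ?(scale0r, scaler0, mulr0, mul0r, addr0, add0r, scalerDl, scalerA,
               mulrDl, mulrA).
Qed.

Lemma span_relation_point n : span_relation (x n, e n).
Proof.
exists n.+1, (fun i => if i == n then 1 else 0).
rewrite !big_ord_recr /= eqxx scale1r mul1r !big1 ?add0r // => i _;
  by rewrite ltn_eqF ?scale0r ?mul0r.
Qed.

End SpanRelation.

Section EquicontinuousFamily.
Context {R : realType} {E : tvsType R}.
Variable K : set (E -> R).
Hypothesis K_eqc : eqc K.

Lemma eqc_linear phi : K phi -> linear_functional phi.
Proof. by case: K_eqc => K_dual _ /K_dual []. Qed.

Lemma eqc_near x e : 0 < e ->
  \forall y \near x, forall phi, K phi -> `|phi x - phi y| < e.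
Proof.
move=> e_gt0; have [_ [K_equi _]] := K_eqc.
apply: filterS (K_equi x _ (entourage_ball _ (PosNum e_gt0))) => y near_y phi Kphi.
by have := near_y phi Kphi; rewrite /= -ball_normE.
Qed.

Lemma eqc_bounded_on (B : set E) : tvs_bounded B ->
  exists M, forall b, B b -> forall phi, K phi -> `|phi b| <= M.
Proof.
move=> B_bd.
have near0 : nbhs (0 : E) [set u | forall phi, K phi -> `|phi u| < 1].
  apply: filterS (eqc_near 0 ltr01) => u near_u phi Kphi.
  have := near_u phi Kphi.
  by rewrite (linear_functional0 (eqc_linear Kphi)) sub0r normrN.
have [s s_gt0 B_sub] := B_bd _ near0.
have s1_gt0 : 0 < s + 1 by rewrite addr_gt0.
have s_lt : s < s + 1 by rewrite ltrDl.
exists (s + 1) => b Bb phi Kphi.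
have [u u_lt1 <-] := B_sub (s + 1) s_lt b Bb.
rewrite (linear_functionalZ (eqc_linear Kphi)) normrM gtr0_norm //.
by rewrite -[leRHS]mulr1 ler_pM2l // ltW // u_lt1.
Qed.

Lemma eqc_pointwise_bounded v : exists M, forall phi, K phi -> `|phi v| <= M.
Proof.
have : compact ((fun phi : {ptws E -> R} => phi v) @` (K : set {ptws E -> R})).
  apply: continuous_compact; last exact: K_eqc.2.2.
  by apply: continuous_subspaceT; exact: (@proj_continuous E (fun _ => R) v).
move=> /compact_bounded /ex_strict_bound_gt0 [M _ M_bd].
by exists M => phi Kphi; apply: ltW; apply: M_bd; exists phi.
Qed.

Hypothesis K_neq0 : K !=set0.

Definition sup_seminorm (v : E) : R := sup [set `|phi v| | phi in K].

Lemma sup_seminorm_ub v phi : K phi -> `|phi v| <= sup_seminorm v.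
Proof.
move=> Kphi; apply: ub_le_sup; last by exists phi.
have [M M_bd] := eqc_pointwise_bounded v.
by exists M => _ [psi Kpsi <-]; exact: M_bd.
Qed.

Lemma sup_seminorm_le v M :
  (forall phi, K phi -> `|phi v| <= M) -> sup_seminorm v <= M.
Proof.
move=> le_M; apply: ge_sup; last by move=> _ [phi Kphi <-]; exact: le_M.
by have [phi Kphi] := K_neq0; exists `|phi v|, phi.
Qed.

Lemma sup_seminorm_dist x y d : (forall phi, K phi -> `|phi x - phi y| <= d) ->
  `|sup_seminorm x - sup_seminorm y| <= d.
Proof.
move=> dist_le.
have le_shift u w : (forall phi, K phi -> `|phi u - phi w| <= d) ->
    sup_seminorm u <= sup_seminorm w + d.
  move=> uw_le; apply: sup_seminorm_le => phi Kphi.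
  have := ler_normD (phi w) (phi u - phi w); rewrite addrCA subrr addr0.
  have := sup_seminorm_ub w Kphi; have := uw_le _ Kphi; lra.
have dist_le' phi : K phi -> `|phi y - phi x| <= d.
  by rewrite distrC; exact: dist_le.
have := le_shift _ _ dist_le; have := le_shift _ _ dist_le'.
by rewrite ler_norml; lra.
Qed.

Lemma continuous_seminorm_sup : continuous_seminorm sup_seminorm.
Proof.
split; [|split].
- move=> x y; apply: sup_seminorm_le => phi Kphi.
  rewrite (linear_functionalD (eqc_linear Kphi)).
  by apply: le_trans (ler_normD _ _) _; apply: lerD; exact: sup_seminorm_ub.
- move=> t v; apply/eqP; rewrite eq_le; apply/andP; split.
    apply: sup_seminorm_le => phi Kphi.
    rewrite (linear_functionalZ (eqc_linear Kphi)) normrM.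
    by apply: ler_wpM2l => //; exact: sup_seminorm_ub.
  have [->|t_neq0] := eqVneq t 0.
    rewrite normr0 mul0r; have [phi Kphi] := K_neq0.
    exact: le_trans (normr_ge0 _) (sup_seminorm_ub _ Kphi).
  rewrite -ler_pdivlMl ?normr_gt0 //; apply: sup_seminorm_le => phi Kphi.
  rewrite ler_pdivlMl ?normr_gt0 // -normrM.
  by rewrite -(linear_functionalZ (eqc_linear Kphi)); exact: sup_seminorm_ub.
- move=> x; apply/cvgrPdist_lt => e e_gt0.
  have e2_gt0 : 0 < e / 2 by rewrite divr_gt0.
  apply: filterS (eqc_near x e2_gt0) => y near_y.
  apply: le_lt_trans (sup_seminorm_dist (fun phi Kphi => ltW (near_y phi Kphi))) _.
  by rewrite ltr_pdivrMr // ltr_pMr // ltr1n.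
Qed.

End EquicontinuousFamily.

Section Tame.
Context {R : realType} {E : tvsType R}.

Lemma tvs_bounded_subset (A B : set E) :
  A `<=` B -> tvs_bounded B -> tvs_bounded A.
Proof.
move=> AB B_bd U U0; have [s s_gt0 B_sub] := B_bd U U0.
by exists s => // t st; exact: subset_trans AB (B_sub t st).
Qed.

Lemma l1_sequence_interpolation (x : nat -> E) : l1_sequence x ->
  exists2 rho, continuous_seminorm rho &
    forall e : nat -> R, (forall n, `|e n| <= 1) ->
      exists2 phi, polar rho phi & forall n, phi (x n) = e n.
Proof.
move=> [_ [rho [rho_sn [d d_gt0 x_l1]]]].
pose p v := d^-1 * rho v.
have p_sn : continuous_seminorm p.
  by apply: continuous_seminormZl; rewrite // invr_ge0 ltW.
exists p => // e e_le1.
have [pD [pZ _]] := p_sn.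
have dom : dominated_relation p (span_relation x e).
  split=> [|_ _ [n [c [-> ->]]]]; first exact: span_relation_linear.
  apply: (@le_trans _ _ (\sum_(i < n) `|c i|)).
    apply: ler_sum => i _; apply: le_trans (ler_norm _) _.
    by rewrite normrM -[leRHS]mulr1 ler_wpM2l.
  by rewrite /p ler_pdivlMl.
have [phi [phi_lin phi_le phi_e]] := hahn_banach pD pZ dom.
exists phi; last by move=> n; apply: phi_e; exact: span_relation_point.
split => // v; rewrite ler_norml phi_le andbT.
have := phi_le (- v); rewrite -scaleN1r (linear_functionalZ phi_lin) scaleN1r.
by rewrite (seminormN p_sn); lra.
Qed.

Lemma l1_sequence_not_tame (B : set E) (x : nat -> E) :
  (forall n, B (x n)) -> l1_sequence x -> ~ tame_set B.
Proof.
move=> Bx x_l1 [_ B_tame].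
have [rho rho_sn interpolate] := l1_sequence_interpolation x_l1.
have [_ no_indep] := B_tame _ (eqc_polar rho_sn).
apply: no_indep; exists (fun n phi => phi (x n)).
split=> [n|]; first by exists (x n).
exists (-1/2), (1/2); split=> [|P M PM]; first lra.
pose e i : R := if i \in P then -1 else if i \in M then 1 else 0.
have [|phi phi_polar phi_e] := interpolate e.
  by move=> i; rewrite /e; do 2?case: ifP => _; rewrite ?normrN ?normr1 ?normr0.
exists phi => //; split => n n_in; rewrite phi_e /e.
  by rewrite n_in; lra.
have /negbTE -> : n \notin P by apply/negP => /PM; rewrite n_in.
by rewrite n_in; lra.
Qed.

Lemma l1_sequence_of_independent (K : set (E -> R)) (x : nat -> E) :
    eqc K -> tvs_bounded (range x) ->
  independent_seq K (fun n phi => phi (x n)) -> l1_sequence x.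
Proof.
move=> K_eqc x_bd [a [b [ab indep]]].
have [phi0 Kphi0 _] := indep [::] [::] (fun n _ => isT).
split => //; exists (sup_seminorm K); split.
  by apply: continuous_seminorm_sup; last by exists phi0.
exists ((b - a) / 2); first by rewrite divr_gt0 // subr_gt0.
move=> n c.
pose Pos := [seq i <- iota 0 n | 0 <= c i]; pose Neg := [seq i <- iota 0 n | c i < 0].
have PosNeg i : i \in Pos -> i \notin Neg.
  by rewrite !mem_filter => /andP [c_ge0 _]; rewrite ltNge c_ge0.
have NegPos i : i \in Neg -> i \notin Pos.
  by rewrite !mem_filter => /andP [c_lt0 _]; rewrite leNgt c_lt0.
(* [phi1] realises the sign pattern of [c], [phi2] the opposite one. *)
have [phi1 Kphi1 [phi1_neg phi1_pos]] := indep _ _ NegPos.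
have [phi2 Kphi2 [phi2_pos phi2_neg]] := indep _ _ PosNeg.
pose v := \sum_(i < n) c i *: x i.
have sep : (b - a) * \sum_(i < n) `|c i| <= phi1 v - phi2 v.
  rewrite /v (linear_functional_sum (eqc_linear K_eqc Kphi1)).
  rewrite (linear_functional_sum (eqc_linear K_eqc Kphi2)) -sumrB mulr_sumr.
  apply: ler_sum => i _.
  have i_in : (i : nat) \in iota 0 n by rewrite mem_iota /= add0n ltn_ord.
  have [c_ge0|c_lt0] := lerP 0 (c i).
    have := phi1_pos i; have := phi2_pos i; rewrite mem_filter c_ge0 i_in.
    by move=> /(_ isT) lt2 /(_ isT) lt1; rewrite ger0_norm //; nra.
  have := phi1_neg i; have := phi2_neg i; rewrite mem_filter c_lt0 i_in.
  by move=> /(_ isT) lt2 /(_ isT) lt1; rewrite ltr0_norm //; nra.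
have le1 := le_trans (ler_norm _) (sup_seminorm_ub K_eqc v Kphi1).
have le2 : - phi2 v <= sup_seminorm K v.
  by apply: le_trans (sup_seminorm_ub K_eqc v Kphi2); rewrite -normrN ler_norm.
rewrite mulrAC; lra.
Qed.

Lemma tame_of_no_l1_sequence (B : set E) : tvs_bounded B ->
  ~ (exists x : nat -> E, (forall n, B (x n)) /\ l1_sequence x) -> tame_set B.
Proof.
move=> B_bd no_l1; split=> // K K_eqc; split.
  have [M M_bd] := eqc_bounded_on K_eqc B_bd.
  by exists M => _ [b Bb <-] phi Kphi; exact: M_bd.
move=> [f [Ff f_indep]].
have /choice [x x_f] n : exists b, B b /\ (fun phi : E -> R => phi b) = f n.
  by have [b Bb <-] := Ff n; exists b.
apply: no_l1; exists x; split=> [n|]; first exact: (x_f n).1.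
apply: (l1_sequence_of_independent K_eqc).
  by apply: tvs_bounded_subset B_bd => _ [n _ <-]; exact: (x_f n).1.
suff -> : (fun n (phi : E -> R) => phi (x n)) = f by [].
by apply/funext => n; exact: (x_f n).2.
Qed.

End Tame.

Theorem theorem6p1 (R : realType) (E : tvsType R) :
  hausdorff_space E ->
  (forall B : set E, tvs_bounded B ->
     (tame_set B <-> ~ exists x : nat -> E, (forall n, B (x n)) /\ l1_sequence x))
  /\
  (@tame_space R E <-> ~ exists x : nat -> E, l1_sequence x).
Proof.
move=> _; split=> [B B_bd|].
  split=> [B_tame [x [Bx x_l1]]|]; last exact: tame_of_no_l1_sequence.
  exact: l1_sequence_not_tame Bx x_l1 B_tame.
split=> [E_tame [x x_l1]|no_l1 B B_bd].
  have range_x n : range x (x n) by exists n.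
  exact: l1_sequence_not_tame range_x x_l1 (E_tame _ x_l1.1).
apply: tame_of_no_l1_sequence B_bd _ => -[x [_ x_l1]].
by apply: no_l1; exists x.
Qed.
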